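(* Let $f=\frac1n\sum_{i=1}^n f_i$ where each $f_i:\mathbb{R}^d\to\mathbb{R}$ is $L$-smooth, and assume moreover that either each $f_i$ is $\mu$-strongly convex for some $\mu>0$, or $\inf_x f(x)>-\infty$. Then the iterates of No Full Grad SARAH (described in the context) satisfy, for every epoch $s$, $$\Big\|\nabla f(x_s^0)-\frac1{n+1}\sum_{t=0}^{n}v_s^t\Big\|^2\le 2\|\nabla f(x_s^0)-v_s\|^2+\frac{2L^2}{n+1}\sum_{t=1}^{n}\|x_s^t-x_s^{t-1}\|^2.$$
   Context: No Full Grad SARAH: input $x_0^0\in\mathbb{R}^d$, $v_0=0$, stepsize $\gamma>0$. For epochs $s=0,1,\dots$: choose a permutation $\pi_s^1,\dots,\pi_s^n$ of $\{1,\dots,n\}$ (by any shuffling rule); set $\tilde v_s^1=0$, $v_s^0=v_s$, $x_s^1=x_s^0-\gamma v_s^0$; for $t=1,\dots,n$ set $\tilde v_s^{t+1}=\frac{t-1}{t}\tilde v_s^t+\frac1t\nabla f_{\pi_s^t}(x_s^t)$, $v_s^t=\frac1n\big(\nabla f_{\pi_s^t}(x_s^t)-\nabla f_{\pi_s^t}(x_s^{t-1})\big)+v_s^{t-1}$, $x_s^{t+1}=x_s^t-\gamma v_s^t$; then $x_{s+1}^0=x_s^{n+1}$, $v_{s+1}=\tilde v_s^{n+1}$. *)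

From HB Require Import structures.
From mathcomp Require Import all_boot all_order all_algebra all_fingroup.
From mathcomp Require Import all_classical all_reals all_analysis.
Set Implicit Arguments. Unset Strict Implicit. Unset Printing Implicit Defensive.
Import Order.TTheory GRing.Theory Num.Theory.
Import numFieldNormedType.Exports.
Local Open Scope ring_scope.

Section Defs.
Variables (R : realType) (d : nat).
Notation V := 'rV[R]_d.

(* Euclidean inner product and Euclidean norm on R^d
   (the library norm on matrices is the sup norm, so we use these explicitly) *)
Definition dotv (u v : V) : R := \sum_(j < d) u 0 j * v 0 j.
Definition enorm (u : V) : R := Num.sqrt (dotv u u).

Definition is_gradient (f : V -> R) (g : V -> V) : Prop :=
  forall x, differentiable f x /\ forall h : V, 'd f x h = dotv (g x) h.

Definition L_smooth (L : R) (f : V -> R) (g : V -> V) : Prop :=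
  is_gradient f g /\ forall x y, enorm (g x - g y) <= L * enorm (x - y).

Definition strongly_convex (mu : R) (f : V -> R) : Prop :=
  forall (x y : V) (a : R), 0 <= a <= 1 ->
    f (a *: x + (1 - a) *: y) <=
      a * f x + (1 - a) * f y - mu / 2 * a * (1 - a) * enorm (x - y) ^+ 2.

Variables (n : nat) (g : 'I_n -> V -> V) (gamma : R).

(* gradient of f_{pi^t} at x for the step t in 1..n of an epoch with permutation p
   (pi^t = p (t-1)); unused (zero) outside 1..n *)
Definition gstep (p : 'S_n) (t : nat) (x : V) : V :=
  match insub t.-1 with Some i => g (p i) x | None => 0 end.

(* inner loop of an epoch started at x_s^0 = x0 with v_s = vs:
   inner t = (x_s^t, x_s^{t+1}, v_s^t) *)
Fixpoint inner (p : 'S_n) (x0 vs : V) (t : nat) : V * V * V :=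
  match t with
  | 0 => (x0, x0 - gamma *: vs, vs)
  | t'.+1 =>
      let: (a, b, v) := inner p x0 vs t' in
      let v' := (n%:R)^-1 *: (gstep p t b - gstep p t a) + v in
      (b, b - gamma *: v', v')
  end.

Definition xin p x0 vs t : V := (inner p x0 vs t).1.1.
Definition vin p x0 vs t : V := (inner p x0 vs t).2.

Fixpoint tv (p : 'S_n) (x0 vs : V) (t : nat) : V :=
  match t with
  | 0 => 0
  | 1 => 0
  | (S k as t').+1 =>
      ((k%:R) / (t'%:R)) *: tv p x0 vs t' + (t'%:R)^-1 *: gstep p t' (xin p x0 vs t')
  end.

(* epoch s returns (x_s^0, v_s); v_0 = 0 *)
Fixpoint epoch (pi : nat -> 'S_n) (x00 : V) (s : nat) : V * V :=
  match s with
  | 0 => (x00, 0)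
  | s'.+1 =>
      let: (x0, vs) := epoch pi x00 s' in
      (xin (pi s') x0 vs n.+1, tv (pi s') x0 vs n.+1)
  end.

Definition sarah_x pi x00 s t : V :=
  xin (pi s) (epoch pi x00 s).1 (epoch pi x00 s).2 t.
Definition sarah_v pi x00 s t : V :=
  vin (pi s) (epoch pi x00 s).1 (epoch pi x00 s).2 t.
Definition sarah_vs pi x00 s : V := (epoch pi x00 s).2.

End Defs.

(* Telescoping the SARAH recursion gives v_s^t = v_s + (1/n) sum_(k<t) D_k, where
   D_k = grad f_(pi^(k+1))(x_s^(k+1)) - grad f_(pi^(k+1))(x_s^k).  Averaging over
   t = 0..n, the error splits as (grad f(x_s^0) - v_s) - sum_k w_k D_k with weights
   w_k = (n-k)/(n(n+1)) <= 1/(n+1), so ||a - b||^2 <= 2||a||^2 + 2||b||^2, the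
   Cauchy-Schwarz bound ||sum_k w_k D_k||^2 <= (1/(n+1)) sum_k ||D_k||^2 and
   ||D_k|| <= L ||x_s^(k+1) - x_s^k|| conclude. *)

From HB Require Import structures.
From mathcomp Require Import all_boot all_order all_algebra all_fingroup.
From mathcomp Require Import all_classical all_reals all_analysis.
From mathcomp Require Import ring lra.
Import Order.TTheory GRing.Theory Num.Theory.
Import numFieldNormedType.Exports.
Local Open Scope ring_scope.

Lemma sqr_sum_le (R : realFieldType) (m : nat) (b : 'I_m -> R) :
  (\sum_k b k) ^+ 2 <= m%:R * \sum_k b k ^+ 2.
Proof.
have sum_const (c : R) : \sum_(k < m) c = m%:R * c.
  by rewrite sumr_const card_ord mulr_natl.
have expand : \sum_(k < m) \sum_(l < m) (b k - b l) ^+ 2 =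
    \sum_(k < m) \sum_(l < m) b k ^+ 2 + \sum_(k < m) \sum_(l < m) b l ^+ 2
    - (\sum_(k < m) \sum_(l < m) b k * b l) *+ 2.
  rewrite -big_split -sumrMnl -sumrB /=; apply: eq_bigr => k _.
  rewrite -big_split -sumrMnl -sumrB /=; apply: eq_bigr => l _.
  ring.
have cross : \sum_(k < m) \sum_(l < m) b k * b l = (\sum_k b k) ^+ 2.
  by rewrite expr2 mulr_suml; apply: eq_bigr => k _; rewrite mulr_sumr.
have : 0 <= \sum_(k < m) \sum_(l < m) (b k - b l) ^+ 2.
  by apply: sumr_ge0 => k _; apply: sumr_ge0 => l _; exact: sqr_ge0.
rewrite expand cross sum_const.
under eq_bigr do rewrite sum_const.
rewrite -mulr_sumr; lra.
Qed.

Section EuclideanNorm.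
Context {R : realType} {d : nat}.
Implicit Types (u v : 'rV[R]_d) (a : R).

Lemma enorm_sqrE u : enorm u ^+ 2 = \sum_(j < d) u 0 j ^+ 2.
Proof.
rewrite sqr_sqrtr; first by apply: eq_bigr => j _; rewrite expr2.
by apply: sumr_ge0 => j _; rewrite -expr2 sqr_ge0.
Qed.

Lemma enorm_sqrB_le u v : enorm (u - v) ^+ 2 <= 2 * enorm u ^+ 2 + 2 * enorm v ^+ 2.
Proof.
rewrite !enorm_sqrE !mulr_sumr -big_split /=; apply: ler_sum => j _.
rewrite !mxE; have := sqr_ge0 (u 0 j + v 0 j); nra.
Qed.

Lemma enorm_sqrZ a u : enorm (a *: u) ^+ 2 = a ^+ 2 * enorm u ^+ 2.
Proof.
by rewrite !enorm_sqrE mulr_sumr; apply: eq_bigr => j _; rewrite mxE exprMn.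
Qed.

Lemma enorm_sum_sqr_le {m} (y : 'I_m -> 'rV[R]_d) :
  enorm (\sum_k y k) ^+ 2 <= m%:R * \sum_k enorm (y k) ^+ 2.
Proof.
rewrite enorm_sqrE.
under [X in _ <= _ * X]eq_bigr do rewrite enorm_sqrE.
rewrite exchange_big mulr_sumr /=; apply: ler_sum => j _.
rewrite summxE; exact: sqr_sum_le.
Qed.

Lemma enorm_wsum_sqr_le {m} (c : R) (w : 'I_m -> R) (y : 'I_m -> 'rV[R]_d) :
  0 <= c -> (forall k, 0 <= w k <= c) -> m%:R * c <= 1 ->
  enorm (\sum_k w k *: y k) ^+ 2 <= c * \sum_k enorm (y k) ^+ 2.
Proof.
move=> c_ge0 w_bnd mc_le1.
apply: (le_trans (enorm_sum_sqr_le _)).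
have sum_ge0 : 0 <= \sum_k enorm (y k) ^+ 2 by apply: sumr_ge0 => k _; exact: sqr_ge0.
apply: (@le_trans _ _ (m%:R * (c ^+ 2 * \sum_k enorm (y k) ^+ 2))).
  rewrite ler_wpM2l // mulr_sumr; apply: ler_sum => k _; rewrite enorm_sqrZ.
  have /andP[w_ge0 w_le] := w_bnd k.
  by rewrite ler_wpM2r ?sqr_ge0 // ler_sqr ?nnegrE.
by rewrite expr2 -mulrA mulrA -[X in _ <= X]mul1r ler_wpM2r ?mulr_ge0.
Qed.

End EuclideanNorm.

Lemma sum_prefix_sums (V : nmodType) (N : nat) (a : nat -> V) :
  \sum_(t < N.+1) \sum_(k < t) a k = \sum_(k < N) a k *+ (N - k).
Proof.
elim: N => [|N IH]; first by rewrite big_ord_recr /= !big_ord0 addr0.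
rewrite big_ord_recr /= IH !big_ord_recr /= subSnn mulr1n addrA -big_split /=.
by congr (_ + _); apply: eq_bigr => k _; rewrite subSn ?(ltnW (ltn_ord k)) // mulrSr.
Qed.

Section SarahEpoch.
Context {R : realType} {d n : nat}.
Variables (g : 'I_n -> 'rV[R]_d -> 'rV[R]_d) (gamma : R) (p : 'S_n) (x0 vs : 'rV[R]_d).
Local Notation x := (xin g gamma p x0 vs).
Local Notation v := (vin g gamma p x0 vs).

Definition grad_incr (k : nat) : 'rV[R]_d :=
  gstep g p k.+1 (x k.+1) - gstep g p k.+1 (x k).

Lemma xin_succ t : x t.+1 = (inner g gamma p x0 vs t).1.2.
Proof. by rewrite /xin /=; case: inner => [[a b] w]. Qed.

Lemma vin_succ t : v t.+1 = n%:R^-1 *: grad_incr t + v t.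
Proof. by rewrite /grad_incr xin_succ /vin /xin /=; case: inner => [[a b] w]. Qed.

Lemma vin_prefix t : v t = vs + n%:R^-1 *: \sum_(k < t) grad_incr k.
Proof.
elim: t => [|t IH]; first by rewrite big_ord0 scaler0 addr0.
rewrite vin_succ IH big_ord_recr /= [in RHS]scalerDr addrCA.
by congr (_ + _); rewrite addrC.
Qed.

Lemma mean_vin : (0 < n)%N ->
  n.+1%:R^-1 *: \sum_(t < n.+1) v t =
  vs + \sum_(k < n) ((n - k)%:R / (n * n.+1)%:R) *: grad_incr k.
Proof.
move=> n_gt0; under eq_bigr do rewrite vin_prefix.
rewrite big_split /= sumr_const card_ord -scaler_sumr sum_prefix_sums.
rewrite scalerDr -[vs *+ _]scaler_nat !scalerA mulVf ?pnatr_eq0 // scale1r.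
rewrite !scaler_sumr; congr (_ + _); apply: eq_bigr => k _.
rewrite -[_ *+ (n - k)]scaler_nat scalerA natrM invfM.
by congr (_ *: _); ring.
Qed.

Variable L : R.
Hypothesis g_lipschitz : forall i a b, enorm (g i a - g i b) <= L * enorm (a - b).

Lemma enorm_grad_incr_le k :
  enorm (grad_incr k) ^+ 2 <= L ^+ 2 * enorm (x k.+1 - x k) ^+ 2.
Proof.
rewrite /grad_incr /gstep /=; case: insubP => [i _ _|_].
  have lip := g_lipschitz (p i) (x k.+1) (x k).
  have e_ge0 : 0 <= enorm (g (p i) (x k.+1) - g (p i) (x k)) by exact: sqrtr_ge0.
  by rewrite -exprMn ler_sqr ?nnegrE ?(le_trans e_ge0 lip).
rewrite subrr enorm_sqrE big1 => [|j _]; last by rewrite mxE expr0n.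
by rewrite mulr_ge0 ?sqr_ge0.
Qed.

End SarahEpoch.

Theorem lemma3 (R : realType) (d n : nat) (f : 'I_n -> 'rV[R]_d -> R)
  (g : 'I_n -> 'rV[R]_d -> 'rV[R]_d) (gradF : 'rV[R]_d -> 'rV[R]_d)
  (L mu gamma : R) (x00 : 'rV[R]_d) (pi : nat -> 'S_n) :
  (0 < n)%N ->
  (forall i, L_smooth L (f i) (g i)) ->
  ((0 < mu /\ forall i, strongly_convex mu (f i)) \/
   (exists m : R, forall x, m <= (n%:R)^-1 * \sum_(i < n) f i x)) ->
  is_gradient (fun x => (n%:R)^-1 * \sum_(i < n) f i x) gradF ->
  0 < gamma ->
  forall s : nat,
    let x := sarah_x g gamma pi x00 s in
    let v := sarah_v g gamma pi x00 s in
    enorm (gradF (x 0%N) - (n.+1%:R)^-1 *: \sum_(t < n.+1) v t) ^+ 2 <=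
      2 * enorm (gradF (x 0%N) - sarah_vs g gamma pi x00 s) ^+ 2
      + 2 * L ^+ 2 / (n.+1%:R) * \sum_(1 <= t < n.+1) enorm (x t - x t.-1) ^+ 2.
Proof.
move=> n_gt0 smooth _ _ _ s; rewrite /= /sarah_x /sarah_v /sarah_vs.
set p := pi s; set x0 := (epoch _ _ _ _ _).1; set vs := (epoch _ _ _ _ _).2.
set x := xin g gamma p x0 vs.
have g_lip i a b : enorm (g i a - g i b) <= L * enorm (a - b) by case: (smooth i).
have n1_inv_ge0 : 0 <= n.+1%:R^-1 :> R by rewrite invr_ge0 ler0n.
have weight_le k : (n - k)%:R / (n * n.+1)%:R <= n.+1%:R^-1 :> R.
  rewrite natrM invfM mulrA ler_piMl // ler_pdivrMr ?ltr0n // mul1r ler_nat.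
  exact: leq_subr.
have -> : 2 * L ^+ 2 / n.+1%:R * \sum_(1 <= t < n.+1) enorm (x t - x t.-1) ^+ 2 =
    2 * (n.+1%:R^-1 * \sum_(k < n) L ^+ 2 * enorm (x k.+1 - x k) ^+ 2).
  by rewrite big_add1 succnK big_mkord -mulr_sumr; ring.
rewrite mean_vin // opprD addrA.
apply: (le_trans (enorm_sqrB_le _ _)); rewrite lerD2l ler_pM2l //.
apply: (le_trans (enorm_wsum_sqr_le _ _ _ n1_inv_ge0 _ _)).
- by move=> k; rewrite weight_le divr_ge0 ?ler0n.
- by rewrite ler_pdivrMr ?ltr0n // mul1r ler_nat.
rewrite ler_wpM2l //; apply: ler_sum => k _.
exact: enorm_grad_incr_le.
Qed.
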